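(* Let $p\in[1,\infty]$, let $Y$ be a complex Banach space, let $(\mathcal G,+)$ be a countable discrete group and $\mathbf X=\ell^p(\mathcal G,Y)$, with $\mathcal P$ and $\mathcal L(\mathbf X,\mathcal P)$ as in the context. Let $(\Omega,\mathcal G,\alpha)$ be a dynamical system and $A:\Omega\to\mathcal L(\mathbf X,\mathcal P)$ a family of operators over it. Then for all $\omega\in\Omega$, $$\sigma^{\mathrm{op}}(A(\omega))=\{A(\nu):\nu\in L(\omega)\}.$$
   Context: $(\mathcal G,+)$ is written additively but need not be abelian. Choose subsets $\mathcal G_n\subseteq\mathcal G$ with $\emptyset\neq\mathcal G_n\neq\mathcal G$, such that for each $m$ there is $N_m$ with $\mathcal G_m\subseteq\mathcal G_n$ for $n\ge N_m$, and $\bigcup_n\mathcal G_n=\mathcal G$; $P_n$ is multiplication by $\mathbf 1_{\mathcal G_n}$, $\mathcal P=(P_n)$. $K\in\mathcal L(\mathbf X)$ is $\mathcal P$-compact if $\|K(I-P_n)\|\to0$ and $\|(I-P_n)K\|\to0$; $\mathcal K(\mathbf X,\mathcal P)$ is the set of these and $\mathcal L(\mathbf X,\mathcal P)=\{A\in\mathcal L(\mathbf X):AK,KA\in\mathcal K(\mathbf X,\mathcal P)\ \forall K\in\mathcal K(\mathbf X,\mathcal P)\}$. $(A_n)$ converges $\mathcal P$-strongly to $A$ ($\mathcal P\text{-}\lim A_n=A$) if $\|K(A_n-A)\|+\|(A_n-A)K\|\to0$ for all $K\in\mathcal K(\mathbf X,\mathcal P)$. $V_gx=(x_{h+g})_{h\in\mathcal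 G}$. $g_n\to\infty$ means $(g_n)$ eventually leaves every finite subset of $\mathcal G$. For $B\in\mathcal L(\mathbf X,\mathcal P)$ and $g=(g_n)$ with $g_n\to\infty$, the limit operator is $B_g:=\mathcal P\text{-}\lim V_{g_n}BV_{-g_n}$ if it exists; $\sigma^{\mathrm{op}}(B)$ (operator spectrum) is the set of all limit operators of $B$. A dynamical system $(\Omega,\mathcal G,\alpha)$: $\Omega$ compact metric space, $\alpha$ maps $\mathcal G$ to homeomorphisms of $\Omega$ with $\alpha(g+h)=\alpha(g)\circ\alpha(h)$. $L(\omega)=\{\nu\in\Omega:\exists g_n\to\infty,\ \alpha(g_n)(\omega)\to\nu\}$. A family of operators over $(\Omega,\mathcal G,\alpha)$ is $A:\Omega\to\mathcal L(\mathbf X,\mathcal P)$ with $A(\alpha(g)(\omega))=V_gA(\omega)V_{-g}$ for all $\omega,g$, and such that $\omega_n\to\omega$ implies $\mathcal P\text{-}\lim A(\omega_n)=A(\omega)$. *)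

From HB Require Import structures.
From mathcomp Require Import all_boot all_algebra.
From mathcomp Require Import all_classical all_reals all_analysis.
From mathcomp Require Import complex.
Import GRing.Theory Num.Theory.

Set Implicit Arguments.
Unset Strict Implicit.
Unset Printing Implicit Defensive.

Local Open Scope classical_set_scope.
Local Open Scope ring_scope.

Record cgroup := CGroup {
  gcar :> countType;
  gadd : gcar -> gcar -> gcar;
  gopp : gcar -> gcar;
  gzero : gcar;
  gaddA : forall a b c, gadd a (gadd b c) = gadd (gadd a b) c;
  gadd0g : forall a, gadd gzero a = a;
  gaddg0 : forall a, gadd a gzero = a;
  gaddNg : forall a, gadd (gopp a) a = gzero;
  gaddgN : forall a, gadd a (gopp a) = gzero }.

Definition to_infty (G : cgroup) (gs : nat -> G) : Prop :=
  forall F : set G, finite_set F -> \forall n \near \oo, ~ F (gs n).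

Section Lp.
Variables (R : realType) (G : cgroup) (Y : completeNormedModType R[i]).
Variable (p : \bar R).

Definition nY (y : Y) : R := complex.Re `|y|.

(* the l^p(G,Y) norm (extended-real valued; +oo if the sequence is not in l^p) *)
Definition lpnorm (x : G -> Y) : \bar R :=
  match p with
  | r%:E => ((\esum_(g in [set: G]) ((nY (x g)) `^ r)%:E) `^ r^-1)%E
  | +oo%E => ereal_sup (range (fun g => (nY (x g))%:E))
  | -oo%E => 0%E
  end.

Definition inX (x : G -> Y) : Prop := (lpnorm x < +oo)%E.

(* operators are represented as maps on G -> Y; only their action on X matters *)
Definition op := (G -> Y) -> (G -> Y).

Definition opnorm (T : op) : \bar R :=
  ereal_sup [set lpnorm (T x) | x in [set x | inX x /\ (lpnorm x <= 1)%E]].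

Definition bounded_op (T : op) : Prop :=
  [/\ forall x, inX x -> inX (T x),
      forall (a : R[i]) x y, inX x -> inX y ->
        T (fun g => a *: x g + y g) = (fun g => a *: T x g + T y g)
    & (opnorm T < +oo)%E].

Definition op_eq (S T : op) : Prop := forall x, inX x -> S x = T x.

Definition opsub (S T : op) : op := fun x g => S x g - T x g.

Variable Gn : nat -> set G.

Definition Pn (n : nat) : op := fun x g => if `[< Gn n g >] then x g else 0.
Definition IminusPn (n : nat) : op := fun x g => x g - Pn n x g.

Definition Pcompact (K : op) : Prop :=
  [/\ bounded_op K,
      (fun n => opnorm (K \o IminusPn n)) @ \oo --> 0%E
    & (fun n => opnorm (IminusPn n \o K)) @ \oo --> 0%E].

Definition LXP (A : op) : Prop :=
  bounded_op A /\ forall K, Pcompact K -> Pcompact (A \o K) /\ Pcompact (K \o A).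

Definition Plim (An : nat -> op) (B : op) : Prop :=
  bounded_op B /\
  forall K, Pcompact K ->
    (fun n => opnorm (K \o opsub (An n) B) + opnorm (opsub (An n) B \o K))%E
      @ \oo --> 0%E.

Definition shiftV (g : G) : op := fun x h => x (gadd h g).

(* Bg is a limit operator of B, i.e. Bg belongs to the operator spectrum of B *)
Definition limop (B Bg : op) : Prop :=
  exists gs : nat -> G, to_infty gs /\
    Plim (fun n => shiftV (gs n) \o B \o shiftV (gopp (gs n))) Bg.

End Lp.

Definition admissible_Gn (G : cgroup) (Gn : nat -> set G) : Prop :=
  [/\ forall n, Gn n != set0 /\ Gn n != setT,
      forall m, exists N, forall n, (N <= n)%N -> Gn m `<=` Gn n
    & \bigcup_n Gn n = setT].

Definition dyn_system (R : realType) (G : cgroup) (Om : pseudoMetricType R)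
    (alpha : G -> Om -> Om) : Prop :=
  [/\ hausdorff_space Om, compact [set: Om],
      forall g, continuous (alpha g) /\
        exists beta : Om -> Om, [/\ cancel (alpha g) beta, cancel beta (alpha g)
                                  & continuous beta]
    & forall g h, alpha (gadd g h) = alpha g \o alpha h].

Definition limset (R : realType) (G : cgroup) (Om : pseudoMetricType R)
    (alpha : G -> Om -> Om) (w nu : Om) : Prop :=
  exists gs : nat -> G, to_infty gs /\ (fun n => alpha (gs n) w) @ \oo --> nu.

Definition op_family (R : realType) (G : cgroup) (Y : completeNormedModType R[i])
    (p : \bar R) (Gn : nat -> set G) (Om : pseudoMetricType R)
    (alpha : G -> Om -> Om) (A : Om -> op G Y) : Prop :=
  [/\ forall w, LXP p Gn (A w),
      forall w g, op_eq p (A (alpha g w))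
                    (shiftV g \o A w \o shiftV (gopp g))
    & forall (ws : nat -> Om) w, ws @ \oo --> w ->
        Plim p Gn (fun n => A (ws n)) (A w)].

From mathcomp Require Import all_boot all_order all_algebra.
From mathcomp Require Import all_classical all_reals all_analysis.
From mathcomp Require Import complex.
Import Order.TTheory GRing.Theory Num.Theory.

Set Implicit Arguments.
Unset Strict Implicit.
Unset Printing Implicit Defensive.

(* By covariance, a limit operator of A(w) along (g_n) is the P-strong limit
   of A(alpha(g_n) w).  Compactness of Omega yields a subsequence along which
   alpha(g_n) w converges to some nu in L(w), and continuity of the family
   makes A(alpha(g_n) w) converge P-strongly to A(nu) along it.  P-strong
   limits of bounded operators are unique, since testing against the
   P-compact projections P_m gives coordinatewise convergence; hence the
   limit operator is A(nu).  Conversely, if alpha(g_n) w tends to nu, then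
   continuity directly exhibits A(nu) as the limit operator along (g_n). *)

Local Open Scope classical_set_scope.
Local Open Scope ring_scope.

Section real_norm.
Context {R : realType} {Y : completeNormedModType R[i]}.
Implicit Types y z : Y.

Lemma normY y : `|y| = (nY y)%:C%C.
Proof. by rewrite /nY RRe_real //; exact: ger0_real. Qed.

Lemma nY_ge0 y : 0 <= nY y.
Proof. by rewrite -lecR -normY (normr_ge0 y). Qed.

Lemma nY0 : nY (0 : Y) = 0.
Proof. by rewrite /nY normr0. Qed.

Lemma nY_eq0 y : (nY y == 0) = (y == 0).
Proof.
apply/eqP/eqP => [y0|->]; last exact: nY0.
by apply/normr0_eq0; rewrite normY y0.
Qed.

Lemma nYD y z : nY (y + z) <= nY y + nY z.
Proof. by rewrite -lecR rmorphD /= -!normY ler_normD. Qed.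

Lemma nYB y z : nY (y - z) = nY (z - y).
Proof. by rewrite /nY distrC. Qed.

Lemma nYZ (c : R) y : 0 <= c -> nY (c%:C%C *: y) = c * nY y.
Proof.
move=> c_ge0; apply: complexI; rewrite -normY normrZ normY rmorphM /=.
by rewrite normc_def /= expr0n /= addr0 sqrtr_sqr ger0_norm.
Qed.

End real_norm.

Lemma esumZl (R : realType) (T : choiceType) (S : set T) (c : R)
    (f : T -> \bar R) : 0 <= c -> (forall i, 0 <= f i)%E ->
  (\esum_(i in S) (c%:E * f i) = c%:E * \esum_(i in S) f i)%E.
Proof.
move=> c_ge0 f_ge0; rewrite /esum -ereal_supZl //; last first.
  apply/set0P; exists 0%E; exists set0; first exact: fsets_set0.
  by rewrite fsbig_set0.
congr ereal_sup; apply/seteqP.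
split => [_ [A [finA AS] <-]|_ [_ [A [finA AS] <-] <-]].
  exists (\sum_(i \in A) f i)%E; first by exists A.
  by rewrite !fsbig_finite // ge0_sume_distrr.
by exists A => //; rewrite !fsbig_finite // ge0_sume_distrr.
Qed.

Section lp_space.
Context {R : realType} {G : cgroup} {Y : completeNormedModType R[i]}.
Context {p : \bar R} (p_ge1 : (1%:E <= p)%E).
Implicit Types (x y : G -> Y) (S T : op G Y).

Lemma lpnorm_ge0 x : (0 <= lpnorm p x)%E.
Proof.
rewrite /lpnorm; case: p p_ge1 => [r| |] //= _; first exact: poweR_ge0.
apply: le_trans (ereal_sup_ubound _); last by exists (gzero G).
by rewrite lee_fin nY_ge0.
Qed.

Lemma lpnorm_ge_pt x g : ((nY (x g))%:E <= lpnorm p x)%E.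
Proof.
rewrite /lpnorm; case: p p_ge1 => [r| |] //= r_ge1; last first.
  by apply: ereal_sup_ubound; exists g.
have r_gt0 : 0 < r by rewrite -lte_fin (lt_le_trans _ r_ge1).
have -> : (nY (x g))%:E = (((nY (x g)) `^ r)%:E `^ r^-1)%E.
  by rewrite poweR_EFin -powRrM mulfV ?gt_eqF // powRr1 // nY_ge0.
apply: gt0_ler_poweR.
- by rewrite invr_ge0 (ltW r_gt0).
- by rewrite in_itv /= lee_fin powR_ge0 leey.
- by rewrite in_itv /= esum_ge0 ?leey // => i _; rewrite lee_fin powR_ge0.
apply: esum_ge; exists [set g]; first by split => //; exact: finite_set1.
by rewrite fsbig_set1.
Qed.

Lemma le_lpnorm x y : (forall g, nY (x g) <= nY (y g)) ->
  (lpnorm p x <= lpnorm p y)%E.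
Proof.
move=> xy; rewrite /lpnorm; case: p p_ge1 => [r| |] //= r_ge1; last first.
  apply: ge_ereal_sup => _ [g _ <-].
  apply: le_trans (ereal_sup_ubound _); last by exists g.
  by rewrite lee_fin.
have r_gt0 : 0 < r by rewrite -lte_fin (lt_le_trans _ r_ge1).
apply: gt0_ler_poweR.
- by rewrite invr_ge0 (ltW r_gt0).
- by rewrite in_itv /= esum_ge0 ?leey // => i _; rewrite lee_fin powR_ge0.
- by rewrite in_itv /= esum_ge0 ?leey // => i _; rewrite lee_fin powR_ge0.
apply: le_esum => i _.
by rewrite lee_fin ge0_ler_powR ?nnegrE ?nY_ge0 ?xy ?(ltW r_gt0).
Qed.

Lemma lpnorm0 : lpnorm p (fun _ : G => 0 : Y) = 0%E.
Proof.
rewrite /lpnorm; case: p p_ge1 => [r| |] //= r_ge1.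
  have r_gt0 : 0 < r by rewrite -lte_fin (lt_le_trans _ r_ge1).
  rewrite esum1 ?poweR0r ?invr_eq0 ?gt_eqF // => i _.
  by rewrite nY0 powR0 // gt_eqF.
rewrite nY0 (_ : range _ = [set 0%E]) ?ereal_sup1 //.
by apply/seteqP; split => [_ [g _ <-]|_ ->] //; exists (gzero G).
Qed.

Lemma lpnormZ (c : R) x : 0 < c ->
  lpnorm p (fun g => c%:C%C *: x g) = (c%:E * lpnorm p x)%E.
Proof.
move=> c_gt0; rewrite /lpnorm; case: p p_ge1 => [r| |] //= r_ge1.
  have r_gt0 : 0 < r by rewrite -lte_fin (lt_le_trans _ r_ge1).
  under eq_esum do rewrite nYZ ?(ltW c_gt0) //.
  under eq_esum do rewrite (powRM _ (ltW c_gt0) (nY_ge0 _)) EFinM.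
  rewrite esumZl ?powR_ge0 //; last by move=> i; rewrite lee_fin powR_ge0.
  rewrite poweRM ?lee_fin ?powR_ge0 ?esum_ge0 //; last first.
    by move=> i _; rewrite lee_fin powR_ge0.
  by rewrite poweR_EFin -powRrM mulfV ?gt_eqF // powRr1 // (ltW c_gt0).
under eq_fun do rewrite nYZ ?(ltW c_gt0) //.
under eq_fun do rewrite EFinM.
rewrite -ereal_supZl ?(ltW c_gt0) ?image_comp //.
by apply/set0P; exists (nY (x (gzero G)))%:E; exists (gzero G).
Qed.

Lemma inX0 : inX p (fun _ : G => 0 : Y).
Proof. by rewrite /inX lpnorm0. Qed.

Lemma opnorm_ge0 T : (0 <= opnorm p T)%E.
Proof.
apply: le_trans (lpnorm_ge0 (T (fun _ => 0))) (ereal_sup_ubound _).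
by exists (fun _ => 0) => //; split; [exact: inX0|rewrite lpnorm0].
Qed.

Lemma eq_opnorm S T : op_eq p S T -> opnorm p S = opnorm p T.
Proof.
move=> ST; rewrite /opnorm; congr ereal_sup; apply/seteqP.
by split => _ [x [inXx x_le1] <-]; exists x; rewrite // ST.
Qed.

Lemma opnorm_cst0 : opnorm p (fun (_ : G -> Y) (_ : G) => 0 : Y) = 0%E.
Proof.
rewrite /opnorm (_ : [set _ | _ in _] = [set 0%E]) ?ereal_sup1 //.
apply/seteqP; split => [_ [x _ <-]|_ ->] /=; first by rewrite lpnorm0.
exists (fun _ => 0); last by rewrite lpnorm0.
by split; [exact: inX0|rewrite lpnorm0].
Qed.

(* [c] rescales [x] into the unit ball of X. *)
Lemma opnorm_ge_pt x : inX p x -> exists2 c : R, 0 < c &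
  forall T g, (forall a, T (fun h => a *: x h) = (fun h => a *: T x h)) ->
  ((c * nY (T x g))%:E <= opnorm p T)%E.
Proof.
rewrite /inX; have := lpnorm_ge0 x; case E : (lpnorm p x) => [L| |] // L_ge0 _.
rewrite lee_fin in L_ge0.
have c_gt0 : 0 < (L + 1)^-1 by rewrite invr_gt0 ltr_wpDl.
exists (L + 1)^-1 => // T g T_homo.
have cx_le1 : (lpnorm p (fun h => (L + 1)^-1%:C%C *: x h) <= 1)%E.
  rewrite lpnormZ // E -EFinM lee_fin mulrC -/(L / (L + 1)).
  by rewrite ler_pdivrMr ?ltr_wpDl // mul1r lerDl.
apply: le_trans (ereal_sup_ubound _); last first.
  exists (fun h => (L + 1)^-1%:C%C *: x h) => //.
  by split => //; rewrite /inX (le_lt_trans cx_le1) ?ltry.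
by rewrite T_homo -nYZ ?(ltW c_gt0) //; exact: lpnorm_ge_pt.
Qed.

Lemma bounded_op0 T : bounded_op p T -> T (fun _ => 0) = (fun _ => 0).
Proof.
case=> _ T_lin _; have := T_lin 1 _ _ inX0 inX0.
under [fun g => _ + _]funext do rewrite scaler0 addr0.
move=> T0; apply/funext => g; have /eqP := congr1 (fun f => f g) T0.
by rewrite scale1r -{1}[T _ g]addr0 eq_sym => /eqP /addrI.
Qed.

Lemma bounded_opZ T a x : bounded_op p T -> inX p x ->
  T (fun g => a *: x g) = (fun g => a *: T x g).
Proof.
move=> T_bd inXx; have [_ T_lin _] := T_bd.
have := T_lin a _ _ inXx inX0; rewrite bounded_op0 //.
under [fun g => a *: x g + _]funext do rewrite addr0.
by move=> ->; apply/funext => g; rewrite addr0.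
Qed.

End lp_space.

Section P_strong_limits.
Context {R : realType} {G : cgroup} {Y : completeNormedModType R[i]}.
Variables (p : \bar R) (Gn : nat -> set G).
Hypotheses (p_ge1 : (1%:E <= p)%E) (Gn_adm : admissible_Gn Gn).
Implicit Types (An Bn : nat -> op G Y) (B C : op G Y).

Lemma Pn_bounded m : bounded_op p (Pn (Y:=Y) Gn m).
Proof.
have Pn_le (x : G -> Y) : (lpnorm p (Pn Gn m x) <= lpnorm p x)%E.
  apply: le_lpnorm => // g; rewrite /Pn; case: ifP => // _.
  by rewrite nY0 nY_ge0.
split.
- by move=> x; rewrite /inX; apply: le_lt_trans (Pn_le x).
- move=> a x y _ _; apply/funext => g; rewrite /Pn; case: ifP => //.
  by rewrite scaler0 addr0.
- apply: le_lt_trans (ltry 1); apply: ge_ereal_sup => _ [x [_ x_le1] <-].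
  exact: le_trans (Pn_le x) x_le1.
Qed.

Lemma Pn_compact m : Pcompact p Gn (Pn (Y:=Y) Gn m).
Proof.
have [_ Gn_incr _] := Gn_adm; have [N GmGn] := Gn_incr m.
split; first exact: Pn_bounded.
- apply: cvg_near_cst; exists N => // n /= Nn.
  rewrite (_ : _ \o _ = fun _ _ => 0) ?opnorm_cst0 //.
  apply/funext => x; apply/funext => g; rewrite /= /Pn /IminusPn /Pn.
  case: (asboolP (Gn m g)) => // Gmg.
  by rewrite (asboolT (GmGn n Nn g Gmg)) subrr.
- apply: cvg_near_cst; exists N => // n /= Nn.
  rewrite (_ : _ \o _ = fun _ _ => 0) ?opnorm_cst0 //.
  apply/funext => x; apply/funext => g; rewrite /= /Pn /IminusPn /Pn.
  case: (asboolP (Gn m g)) => Gmg; last by rewrite if_same subrr.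
  by rewrite (asboolT (GmGn n Nn g Gmg)) subrr.
Qed.

(* Testing against the P-compact projection [Pn Gn m], with [g] in [Gn m],
   turns P-strong convergence into coordinatewise convergence. *)
Lemma Plim_pt An B x g eps : (forall n, bounded_op p (An n)) ->
  Plim p Gn An B -> inX p x -> 0 < eps ->
  \forall n \near \oo, nY (An n x g - B x g) < eps.
Proof.
move=> An_bd [B_bd An_B] inXx eps_gt0.
have [m Gmg] : exists m, Gn m g.
  have [_ _ GnT] := Gn_adm.
  by have : [set: G] g by []; rewrite -GnT => -[m _ Gmg]; exists m.
have [c c_gt0 c_bound] := opnorm_ge_pt p_ge1 inXx.
have := An_B _ (Pn_compact m) [set e | (e < (c * eps)%:E)%E].
case=> [|N _ An_B_small].
  exact: (@nbhs_open_ereal_lt _ 0 (fun=> c * eps) (mulr_gt0 c_gt0 eps_gt0)).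
exists N => // n /= Nn.
have PmE : (Pn Gn m \o opsub (An n) B) x g = An n x g - B x g.
  by rewrite /= /Pn /opsub (asboolT Gmg).
have Pm_homo a : (Pn Gn m \o opsub (An n) B) (fun h => a *: x h) =
    (fun h => a *: (Pn Gn m \o opsub (An n) B) x h).
  apply/funext => h; rewrite /= /Pn /opsub !(bounded_opZ p_ge1) //.
  by case: ifP; rewrite ?scalerBr ?scaler0.
have := c_bound _ g Pm_homo; rewrite PmE => An_B_le.
rewrite -(ltr_pM2l c_gt0) -lte_fin (le_lt_trans An_B_le) //.
by rewrite (le_lt_trans _ (An_B_small n Nn)) //= leeDl // opnorm_ge0.
Qed.

Lemma Plim_unique An B C : (forall n, bounded_op p (An n)) ->
  Plim p Gn An B -> Plim p Gn An C -> op_eq p B C.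
Proof.
move=> An_bd An_B An_C x inXx; apply/funext => g; apply/eqP.
rewrite -subr_eq0 -nY_eq0 eq_le nY_ge0 andbT; apply/ler_addgt0Pr => e e_gt0.
have e2_gt0 : 0 < e / 2 by rewrite divr_gt0.
have [n [An_B_small An_C_small]] := filter_ex (filterI
  (Plim_pt g An_bd An_B inXx e2_gt0) (Plim_pt g An_bd An_C inXx e2_gt0)).
have -> : B x g - C x g = (B x g - An n x g) + (An n x g - C x g).
  by rewrite addrA subrK.
rewrite add0r; apply/ltW/(le_lt_trans (nYD _ _)).
by rewrite nYB [e]splitr ltrD.
Qed.

Lemma Plim_comp An B (nk : nat -> nat) : nk @ \oo --> \oo ->
  Plim p Gn An B -> Plim p Gn (An \o nk) B.
Proof. by move=> nk_oo [B_bd An_B]; split => // K /An_B; exact: cvg_comp. Qed.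

Lemma eq_Plim An Bn C : (forall n, op_eq p (An n) (Bn n)) ->
  Plim p Gn An C -> Plim p Gn Bn C.
Proof.
move=> AB [C_bd An_C]; split => // K K_cpt; have [[K_inX _ _] _ _] := K_cpt.
apply: cvg_trans (An_C K K_cpt); apply: near_eq_cvg; apply: nearW => n /=.
congr (_ + _)%E; apply: eq_opnorm => y inXy /=; rewrite /opsub.
  by rewrite (AB n y inXy).
by rewrite (AB n (K y) (K_inX y inXy)).
Qed.

End P_strong_limits.

Lemma cvgn_ge_id (nk : nat -> nat) :
  (forall k, (k <= nk k)%N) -> nk @ \oo --> \oo.
Proof.
move=> nk_ge P [N _ NP]; exists N => // k /= Nk.
by apply: NP; exact: leq_trans (nk_ge k).
Qed.

Lemma compact_cvg_subseq (R : realType) (T : pseudoMetricType R)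
    (s : nat -> T) : compact [set: T] ->
  exists nu : T,
    exists2 nk : nat -> nat, nk @ \oo --> \oo & s \o nk @ \oo --> nu.
Proof.
move=> T_cpt; have [nu [_ nu_cluster]] := T_cpt (fmap s \oo) _ filterT.
have near_nu k : exists n, (k <= n)%N /\ ball nu k.+1%:R^-1 (s n).
  case: (nu_cluster (s @` [set n | (k <= n)%N]) (ball nu k.+1%:R^-1)).
  - by exists k => // n /= kn; exists n.
  - by apply: nbhsx_ballx; rewrite invr_gt0.
  by move=> _ [[n kn <-] nu_sn]; exists n.
have [nk /all_and2 [nk_ge nk_nu]] := choice near_nu.
exists nu, nk; first exact: cvgn_ge_id.
apply/cvg_ballP => eps eps_gt0.
apply: filterS (near_infty_natSinv_lt (PosNum eps_gt0)) => k k_lt.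
exact: le_ball (ltW k_lt) _ (nk_nu k).
Qed.

Lemma to_infty_comp (G : cgroup) (gs : nat -> G) (nk : nat -> nat) :
  nk @ \oo --> \oo -> to_infty gs -> to_infty (gs \o nk).
Proof. by move=> nk_oo gs_oo F /gs_oo; exact: nk_oo. Qed.

Theorem proposition4p2 (R : realType) (p : \bar R) (G : cgroup)
    (Y : completeNormedModType R[i]) (Gn : nat -> set G)
    (Om : pseudoMetricType R) (alpha : G -> Om -> Om) (A : Om -> op G Y) :
  (1%:E <= p)%E ->
  admissible_Gn Gn ->
  dyn_system alpha ->
  op_family p Gn alpha A ->
  forall w : Om,
    (forall B : op G Y, limop p Gn (A w) B ->
       exists nu, limset alpha w nu /\ op_eq p B (A nu)) /\
    (forall nu, limset alpha w nu -> limop p Gn (A w) (A nu)).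
Proof.
move=> p_ge1 Gn_adm [_ Om_cpt _ _] [A_LXP A_shift A_cont] w.
have A_bd nu : bounded_op p (A nu) by have [] := A_LXP nu.
have shiftE (gs : nat -> G) C :
    Plim p Gn (fun n => shiftV (gs n) \o A w \o shiftV (gopp (gs n))) C <->
    Plim p Gn (fun n => A (alpha (gs n) w)) C.
  by split; apply: eq_Plim => n x inXx; rewrite (A_shift w (gs n) x inXx).
split=> [B [gs [gs_oo /shiftE Aw_B]]|nu [gs [gs_oo w_nu]]]; last first.
  by exists gs; split => //; apply/shiftE; exact: A_cont.
have [nu [nk nk_oo w_nu]] :=
  compact_cvg_subseq (fun n => alpha (gs n) w) Om_cpt.
exists nu; split; first by exists (gs \o nk); split => //; exact: to_infty_comp.
apply: (Plim_unique p_ge1 Gn_adm (An := fun k => A (alpha (gs (nk k)) w))).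
- by move=> k; exact: A_bd.
- exact: Plim_comp nk_oo Aw_B.
- exact: A_cont.
Qed.
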